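(* Let $f\colon X\to X$ be an expansive homeomorphism of a compact metric space $X$. Then there are $\delta>0$ and a continuous function $\mathcal L\colon\mathcal K_\delta(X)\to\mathbb{R}$ such that: 1. $\mathcal L(A)\ge0$ for all $A\in\mathcal K_\delta(X)$, with equality if and only if $A$ is a singleton; 2. $\ddot{\mathcal L}=\mathcal L$, i.e. $\mathcal L(f(A))-2\mathcal L(A)+\mathcal L(f^{-1}(A))=\mathcal L(A)$ whenever $f(A),A,f^{-1}(A)\in\mathcal K_\delta(X)$.
   Context: A homeomorphism $f$ of a compact metric space $(X,\operatorname{dist})$ is expansive if there is $\delta>0$ such that $\operatorname{dist}(f^n(x),f^n(y))\le\delta$ for all $n\in\mathbb{Z}$ implies $x=y$. $\mathcal K(X)$ is the space of nonempty compact subsets of $X$ with the Hausdorff distance, and $\mathcal K_\delta(X)=\{A\in\mathcal K(X):\operatorname{diam}(A)\le\delta\}$. *)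

From Stdlib Require Import Reals List ZArith.
Open Scope R_scope.

Section Metric.
Context {X : Type}.
Variable d : X -> X -> R.

Definition is_metric : Prop :=
  (forall x y, 0 <= d x y) /\ (forall x y, d x y = 0 <-> x = y) /\
  (forall x y, d x y = d y x) /\ (forall x y z, d x z <= d x y + d y z).

Definition is_open (U : X -> Prop) : Prop :=
  forall x, U x -> exists r, 0 < r /\ forall y, d x y < r -> U y.

Definition is_compact (K : X -> Prop) : Prop :=
  forall (I : Type) (U : I -> X -> Prop),
    (forall i, is_open (U i)) ->
    (forall x, K x -> exists i, U i x) ->
    exists l : list I, forall x, K x -> exists i, In i l /\ U i x.

Definition continuous_map (f : X -> X) : Prop :=
  forall x eps, 0 < eps -> exists del, 0 < del /\
    forall y, d x y < del -> d (f x) (f y) < eps.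

Definition homeomorphism (f g : X -> X) : Prop :=
  continuous_map f /\ continuous_map g /\
  (forall x, g (f x) = x) /\ (forall x, f (g x) = x).

Definition iterZ (f g : X -> X) (n : Z) : X -> X :=
  match n with
  | Z0 => fun x => x
  | Zpos p => Nat.iter (Pos.to_nat p) f
  | Zneg p => Nat.iter (Pos.to_nat p) g
  end.

Definition expansive (f g : X -> X) : Prop :=
  exists delta, 0 < delta /\ forall x y,
    (forall n : Z, d (iterZ f g n x) (iterZ f g n y) <= delta) -> x = y.

Definition in_KX (A : X -> Prop) : Prop := (exists x, A x) /\ is_compact A.

Definition diam_le (A : X -> Prop) (delta : R) : Prop :=
  forall a b, A a -> A b -> d a b <= delta.

Definition in_Kdelta (delta : R) (A : X -> Prop) : Prop :=
  in_KX A /\ diam_le A delta.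

Definition in_nbhd (A B : X -> Prop) (r : R) : Prop :=
  forall a, A a -> exists b, B b /\ d a b <= r.

(* Hausdorff distance H(A,B) = inf { r >= 0 | A ⊆ N_r(B) and B ⊆ N_r(A) };
   hausdorff_lt A B eta  unfolds  H(A,B) < eta. *)
Definition hausdorff_lt (A B : X -> Prop) (eta : R) : Prop :=
  exists r, 0 <= r /\ r < eta /\ in_nbhd A B r /\ in_nbhd B A r.

Definition continuous_on_Kdelta (delta : R) (L : (X -> Prop) -> R) : Prop :=
  forall A eps, in_Kdelta delta A -> 0 < eps -> exists eta, 0 < eta /\
    forall B, in_Kdelta delta B -> hausdorff_lt A B eta -> Rabs (L B - L A) < eps.

Definition singleton (A : X -> Prop) : Prop :=
  exists x, forall y, A y <-> y = x.

Definition image (h : X -> X) (A : X -> Prop) : X -> Prop :=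
  fun y => exists a, A a /\ y = h a.

End Metric.

From Stdlib Require Import Reals List ZArith Lra Lia ClassicalEpsilon.
From Coquelicot Require Import Coquelicot.
Open Scope R_scope.

(* For k in Z let psi_k(A) = sup_{a,b in A} min(1, max(0, d(f^k a, f^k b) - delta)),
   where delta is an expansivity constant.  Expansivity says exactly that
   psi_k(A) = 0 for all k iff A is a singleton.  Put
   L(A) = sum_{k in Z} lam^|k| psi_k(A) with lam = (3 - sqrt 5)/2, a root of
   lam^2 - 3 lam + 1 = 0.  Since psi_k(f A) = psi_{k+1}(A) and psi_0 vanishes
   on K_delta, the two one-sided sums get multiplied by lam and 1/lam under f
   and the other way round under f^-1, so L(f A) + L(f^-1 A) = 3 L(A).  Each
   psi_k is Hausdorff-continuous at a compact A by uniform continuity of f^k on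
   A, and the geometric weights make the tails uniformly small. *)

Section WeightedSum.
Variable lam : R.
Hypothesis lam_gt0 : 0 < lam.
Hypothesis lam_lt1 : lam < 1.

Definition bounded01 (u : nat -> R) : Prop := forall n, 0 <= u n <= 1.

Definition wsum (u : nat -> R) : R := Series (fun n => lam ^ n * u n).

Lemma lam_pow_gt0 n : 0 < lam ^ n.
Proof. apply pow_lt; lra. Qed.

Lemma ex_series_geom_lam : ex_series (fun n => lam ^ n).
Proof. apply ex_series_geom. rewrite Rabs_pos_eq; lra. Qed.

Lemma ex_series_wsum u : bounded01 u -> ex_series (fun n => lam ^ n * u n).
Proof.
  intros Hu.
  apply (@ex_series_le R_AbsRing R_CompleteNormedModule _ (fun n => lam ^ n));
    [|exact ex_series_geom_lam].
  intros n. change (norm (lam ^ n * u n)) with (Rabs (lam ^ n * u n)).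
  specialize (Hu n). pose proof (lam_pow_gt0 n).
  rewrite Rabs_pos_eq by nra. nra.
Qed.

Lemma wsum_ext u v : (forall n, u n = v n) -> wsum u = wsum v.
Proof. intros H. apply Series_ext. intros n. now rewrite H. Qed.

Lemma wsum_bounds u : bounded01 u -> 0 <= wsum u <= / (1 - lam).
Proof.
  intros Hu. split.
  - rewrite <- (Rmult_0_l (Series (fun n => lam ^ n))), <- Series_scal_l.
    apply Series_le; [|now apply ex_series_wsum].
    intros n. specialize (Hu n). pose proof (lam_pow_gt0 n). split; [lra|nra].
  - rewrite <- (is_series_unique _ _ (is_series_geom lam ltac:(rewrite Rabs_pos_eq; lra))).
    apply Series_le; [|exact ex_series_geom_lam].
    intros n. specialize (Hu n). pose proof (lam_pow_gt0 n). split; nra.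
Qed.

Lemma wsum_shift u : bounded01 u -> wsum u = u 0%nat + lam * wsum (fun n => u (S n)).
Proof.
  intros Hu. unfold wsum. rewrite Series_incr_1 by now apply ex_series_wsum.
  rewrite <- Series_scal_l. simpl. f_equal; [ring|].
  apply Series_ext. intros n. simpl. ring.
Qed.

Lemma wsum_term_le u n : bounded01 u -> lam ^ n * u n <= wsum u.
Proof.
  revert u. induction n as [|n IH]; intros u Hu;
    rewrite wsum_shift by exact Hu; simpl.
  - pose proof (wsum_bounds (fun n => u (S n)) (fun n => Hu (S n))). nra.
  - specialize (IH (fun n => u (S n)) (fun n => Hu (S n))). simpl in IH.
    pose proof (Hu 0%nat). nra.
Qed.

Lemma wsum_eq0 u : bounded01 u -> wsum u = 0 <-> forall n, u n = 0.
Proof.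
  intros Hu. split.
  - intros H0 n. pose proof (wsum_term_le u n Hu). pose proof (lam_pow_gt0 n).
    specialize (Hu n). nra.
  - intros H0. rewrite (wsum_ext u (fun _ => 0 * 0)) by (intros; rewrite H0; ring).
    unfold wsum. rewrite (Series_ext _ (fun n => 0 * lam ^ n)) by (intros; ring).
    rewrite Series_scal_l. ring.
Qed.

Lemma wsum_close N e u v : 0 <= e -> bounded01 u -> bounded01 v ->
  (forall n, (n < N)%nat -> Rabs (u n - v n) <= e) ->
  Rabs (wsum u - wsum v) <= e / (1 - lam) + lam ^ N / (1 - lam).
Proof.
  revert u v. induction N as [|N IH]; intros u v He Hu Hv Hc.
  - pose proof (wsum_bounds u Hu). pose proof (wsum_bounds v Hv).
    assert (0 <= e / (1 - lam)) by (apply Rdiv_le_0_compat; lra).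
    simpl. unfold Rdiv. rewrite Rmult_1_l. apply Rabs_le. lra.
  - rewrite (wsum_shift u Hu), (wsum_shift v Hv).
    specialize (IH (fun n => u (S n)) (fun n => v (S n)) He
      (fun n => Hu (S n)) (fun n => Hv (S n)) ltac:(intros n Hn; apply Hc; lia)).
    assert (H0 : Rabs (u 0%nat - v 0%nat) <= e) by (apply Hc; lia).
    replace (_ - _) with ((u 0%nat - v 0%nat)
        + lam * (wsum (fun n => u (S n)) - wsum (fun n => v (S n)))) by ring.
    eapply Rle_trans; [apply Rabs_triang|].
    rewrite Rabs_mult, (Rabs_pos_eq lam) by lra.
    replace (e / (1 - lam) + lam ^ S N / (1 - lam))
      with (e + lam * (e / (1 - lam) + lam ^ N / (1 - lam))) by (simpl; field; lra).
    nra.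
Qed.

Lemma wsum_approx eps : 0 < eps -> exists N e, 0 < e /\ forall u v,
  bounded01 u -> bounded01 v -> (forall n, (n < N)%nat -> Rabs (u n - v n) <= e) ->
  Rabs (wsum u - wsum v) < eps.
Proof.
  intros Heps. set (e := eps * (1 - lam) / 4).
  assert (He : 0 < e) by (unfold e; nra).
  destruct (pow_lt_1_zero lam ltac:(rewrite Rabs_pos_eq; lra) e He) as [N HN].
  specialize (HN N (le_n N)). rewrite Rabs_pos_eq in HN by (apply pow_le; lra).
  exists N, e. split; [exact He|]. intros u v Hu Hv Hc.
  eapply Rle_lt_trans; [apply (wsum_close N e); auto; lra|].
  apply (Rmult_lt_reg_r (1 - lam)); [lra|].
  replace ((e / (1 - lam) + lam ^ N / (1 - lam)) * (1 - lam)) with (e + lam ^ N)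
    by (field; lra).
  unfold e in *. nra.
Qed.

End WeightedSum.

Definition excess (delta t : R) : R := Rmin 1 (Rmax 0 (t - delta)).

Lemma excess_bounds delta t : 0 <= excess delta t <= 1.
Proof. unfold excess, Rmin, Rmax. repeat destruct Rle_dec; lra. Qed.

Lemma excess_lipschitz delta s t :
  Rabs (excess delta s - excess delta t) <= Rabs (s - t).
Proof.
  unfold excess, Rmin, Rmax. repeat destruct Rle_dec; apply Rabs_le;
    unfold Rabs; destruct Rcase_abs; lra.
Qed.

Lemma excess_eq0 delta t : excess delta t = 0 <-> t <= delta.
Proof. unfold excess, Rmin, Rmax. repeat destruct Rle_dec; lra. Qed.

Section Sup01.
Variable S : R -> Prop.
Hypothesis S_bounded : forall v, S v -> 0 <= v <= 1.

Definition sup01 : R := real (Lub_Rbar S).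

Lemma Lub_Rbar_le1 : Rbar_le (Lub_Rbar S) 1.
Proof. apply Lub_Rbar_correct. intros x Hx. apply S_bounded, Hx. Qed.

Lemma sup01_ub v : S v -> v <= sup01.
Proof.
  intros Hv. pose proof (proj1 (Lub_Rbar_correct S) v Hv). pose proof Lub_Rbar_le1.
  unfold sup01. destruct (Lub_Rbar S); simpl in *; tauto.
Qed.

Lemma sup01_le u : (exists v, S v) -> (forall v, S v -> v <= u) -> sup01 <= u.
Proof.
  intros [w Hw] Hu. pose proof (proj1 (Lub_Rbar_correct S) w Hw).
  assert (Rbar_le (Lub_Rbar S) u) by (apply Lub_Rbar_correct; exact Hu).
  unfold sup01. destruct (Lub_Rbar S); simpl in *; tauto.
Qed.

Lemma sup01_bounds : 0 <= sup01 <= 1.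
Proof.
  pose proof Lub_Rbar_le1. unfold sup01.
  destruct (Lub_Rbar S) eqn:E; simpl in *; [|tauto|lra]. split; [|exact H].
  destruct (Classical_Prop.classic (exists v, S v)) as [[v Hv]|Hn].
  - pose proof (proj1 (Lub_Rbar_correct S) v Hv). rewrite E in H0.
    pose proof (S_bounded v Hv). simpl in H0. lra.
  - assert (Hbot : Rbar_le (Lub_Rbar S) m_infty).
    { apply Lub_Rbar_correct. intros x Hx. exfalso. apply Hn. eauto. }
    now rewrite E in Hbot.
Qed.

End Sup01.

Lemma sup01_ext S1 S2 : (forall v, S1 v <-> S2 v) -> sup01 S1 = sup01 S2.
Proof. intros H. unfold sup01. now rewrite (Lub_Rbar_eqset S1 S2 H). Qed.

Lemma finite_min_pos {I : Type} (r : I -> R) (l : list I) :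
  (forall i, 0 < r i) -> exists eta, 0 < eta /\ forall i, In i l -> eta <= r i.
Proof.
  intros Hr. induction l as [|j l [eta [Heta Hle]]].
  - exists 1. split; [lra|]. intros i [].
  - exists (Rmin (r j) eta). split; [now apply Rmin_glb_lt|].
    intros i [<-|Hi]; [apply Rmin_l|].
    eapply Rle_trans; [apply Rmin_r|]. now apply Hle.
Qed.

Section Metric.
Context {X : Type}.
Variable d : X -> X -> R.
Hypothesis Hm : is_metric d.

Lemma dist_sym x y : d x y = d y x. Proof. apply Hm. Qed.
Lemma dist_triangle x y z : d x z <= d x y + d y z. Proof. apply Hm. Qed.
Lemma dist_refl x : d x x = 0. Proof. now apply Hm. Qed.

Lemma dist_diff_le a1 a2 b1 b2 : Rabs (d a1 a2 - d b1 b2) <= d a1 b1 + d a2 b2.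
Proof.
  pose proof (dist_triangle a1 b1 a2). pose proof (dist_triangle b1 b2 a2).
  pose proof (dist_triangle b1 a1 b2). pose proof (dist_triangle a1 a2 b2).
  rewrite (dist_sym b1 a1), (dist_sym b2 a2) in *. apply Rabs_le. lra.
Qed.

Lemma uniform_continuity_on_compact (A : X -> Prop) (F : X -> X) eps :
  is_compact d A -> continuous_map d F -> 0 < eps ->
  exists eta, 0 < eta /\ forall a y, A a -> d a y < eta -> d (F a) (F y) < eps.
Proof.
  intros HA HF Heps.
  assert (Hr : forall a : {a | A a}, exists r, 0 < r /\
      forall y, d (proj1_sig a) y < r -> d (F (proj1_sig a)) (F y) < eps / 2).
  { intros a. apply HF. lra. }
  destruct (choice _ Hr) as [r Hr'].
  (* Cover A by balls of half the continuity radius: a point within eta of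
     x is then within the full radius of the centre of x's ball. *)
  destruct (HA _ (fun a y => d (proj1_sig a) y < r a / 2)) as [l Hl].
  - intros a x Hx. exists (r a / 2 - d (proj1_sig a) x). split; [lra|].
    intros y Hy. pose proof (dist_triangle (proj1_sig a) x y). lra.
  - intros x Hx. exists (exist _ x Hx). cbn [proj1_sig]. rewrite dist_refl.
    apply Rdiv_lt_0_compat; [apply (Hr' (exist _ x Hx))|lra].
  - destruct (finite_min_pos (fun a => r a / 2) l) as [eta [Heta Hle]].
    { intros a. pose proof (proj1 (Hr' a)). lra. }
    exists eta. split; [exact Heta|]. intros x y Hx Hxy.
    destruct (Hl x Hx) as [a [Ha Hax]]. specialize (Hle a Ha).
    destruct (Hr' a) as [_ Hc].
    assert (H1 : d (F (proj1_sig a)) (F x) < eps / 2) by (apply Hc; lra).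
    assert (H2 : d (F (proj1_sig a)) (F y) < eps / 2).
    { apply Hc. pose proof (dist_triangle (proj1_sig a) x y). lra. }
    pose proof (dist_triangle (F x) (F (proj1_sig a)) (F y)).
    rewrite dist_sym in H1. lra.
Qed.

Lemma hausdorff_lt_mono (A B : X -> Prop) e1 e2 :
  e1 <= e2 -> hausdorff_lt d A B e1 -> hausdorff_lt d A B e2.
Proof. intros He [r [H0 [H1 H2]]]. exists r. repeat split; tauto || lra. Qed.

End Metric.

Lemma continuous_map_comp {X : Type} (d : X -> X -> R) (F G : X -> X) :
  continuous_map d F -> continuous_map d G -> continuous_map d (fun x => F (G x)).
Proof.
  intros HF HG x eps Heps. destruct (HF (G x) eps Heps) as [e1 [He1 H1]].
  destruct (HG x e1 He1) as [e2 [He2 H2]]. exists e2. split; auto.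
Qed.

Lemma continuous_map_id {X : Type} (d : X -> X -> R) : continuous_map d (fun x => x).
Proof. intros x eps Heps. exists eps. split; auto. Qed.

Lemma continuous_map_iter {X : Type} (d : X -> X -> R) (F : X -> X) n :
  continuous_map d F -> continuous_map d (Nat.iter n F).
Proof.
  intros HF. induction n as [|n IH]; simpl.
  - apply continuous_map_id.
  - now apply (continuous_map_comp d F (Nat.iter n F)).
Qed.

Lemma iterZ_swap {X : Type} (f g : X -> X) n :
  iterZ g f (Z.of_nat n) = iterZ f g (- Z.of_nat n).
Proof. now destruct n. Qed.

Lemma homeomorphism_sym {X : Type} (d : X -> X -> R) (f g : X -> X) :
  homeomorphism d f g -> homeomorphism d g f.
Proof. intros (Hf & Hg & Hgf & Hfg). now repeat split. Qed.

Section Iterates.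
Context {X : Type}.
Variable d : X -> X -> R.
Variables f g : X -> X.
Hypothesis Hh : homeomorphism d f g.

Lemma continuous_iterZ k : continuous_map d (iterZ f g k).
Proof.
  destruct Hh as (Hf & Hg & _). destruct k; simpl.
  - apply continuous_map_id.
  - now apply continuous_map_iter.
  - now apply continuous_map_iter.
Qed.

Lemma iterZ_of_nat n x : iterZ f g (Z.of_nat n) x = Nat.iter n f x.
Proof. destruct n; simpl; auto. now rewrite SuccNat2Pos.id_succ. Qed.

Lemma iterZ_opp_of_nat n x : iterZ f g (- Z.of_nat n) x = Nat.iter n g x.
Proof. destruct n; simpl; auto. now rewrite SuccNat2Pos.id_succ. Qed.

Lemma iterZ_succ_r k x : iterZ f g k (f x) = iterZ f g (k + 1) x.
Proof.
  destruct Hh as (_ & _ & Hgf & _).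
  destruct (Z_le_gt_dec 0 k) as [Hk|Hk].
  - replace k with (Z.of_nat (Z.to_nat k)) by lia.
    replace (Z.of_nat (Z.to_nat k) + 1)%Z with (Z.of_nat (S (Z.to_nat k))) by lia.
    rewrite !iterZ_of_nat. now rewrite Nat.iter_succ_r.
  - replace k with (- Z.of_nat (S (Z.to_nat (- k - 1))))%Z by lia.
    replace (- Z.of_nat (S (Z.to_nat (- k - 1))) + 1)%Z
      with (- Z.of_nat (Z.to_nat (- k - 1)))%Z by lia.
    rewrite !iterZ_opp_of_nat. now rewrite Nat.iter_succ_r, Hgf.
Qed.

Lemma iterZ_pred_r k x : iterZ f g k (g x) = iterZ f g (k - 1) x.
Proof.
  destruct Hh as (_ & _ & _ & Hfg).
  rewrite <- (Hfg x) at 2. rewrite iterZ_succ_r. f_equal. lia.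
Qed.

End Iterates.

Section Spread.
Context {X : Type}.
Variable d : X -> X -> R.
Variable delta : R.

Definition excess_set (F : X -> X) (A : X -> Prop) : R -> Prop :=
  fun v => exists a b, A a /\ A b /\ v = excess delta (d (F a) (F b)).

Definition spread (F : X -> X) (A : X -> Prop) : R := sup01 (excess_set F A).

Lemma excess_set_bounded F A v : excess_set F A v -> 0 <= v <= 1.
Proof. intros (a & b & _ & _ & ->). apply excess_bounds. Qed.

Lemma spread_bounds F A : 0 <= spread F A <= 1.
Proof. exact (sup01_bounds _ (excess_set_bounded F A)). Qed.

Lemma spread_ge F A a b : A a -> A b -> excess delta (d (F a) (F b)) <= spread F A.
Proof. intros Ha Hb. apply sup01_ub; [apply excess_set_bounded|]. now exists a, b. Qed.

Lemma spread_le F A u : (exists x, A x) ->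
  (forall a b, A a -> A b -> excess delta (d (F a) (F b)) <= u) -> spread F A <= u.
Proof.
  intros [x Hx] Hu. apply sup01_le.
  - exists (excess delta (d (F x) (F x))). now exists x, x.
  - intros v (a & b & Ha & Hb & ->). now apply Hu.
Qed.

Lemma spread_image h F G A : (forall x, F (h x) = G x) ->
  spread F (image h A) = spread G A.
Proof.
  intros HFG. apply sup01_ext. intros v. split.
  - intros (a & b & [a' [Ha' ->]] & [b' [Hb' ->]] & ->). exists a', b'. now rewrite !HFG.
  - intros (a & b & Ha & Hb & ->). exists (h a), (h b).
    split; [now exists a|]. split; [now exists b|]. now rewrite !HFG.
Qed.

Lemma spread_eq0 F A : (exists x, A x) ->
  spread F A = 0 <-> forall a b, A a -> A b -> d (F a) (F b) <= delta.
Proof.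
  intros HA. split.
  - intros H0 a b Ha Hb. apply excess_eq0.
    pose proof (spread_ge F A a b Ha Hb).
    pose proof (excess_bounds delta (d (F a) (F b))). lra.
  - intros H. pose proof (spread_bounds F A).
    assert (spread F A <= 0); [|lra].
    apply spread_le; [exact HA|]. intros a b Ha Hb. right. now apply excess_eq0, H.
Qed.

Hypothesis Hm : is_metric d.

Lemma spread_le_of_nbhd F A B r e : (exists x, A x) -> in_nbhd d A B r ->
  (forall a b, A a -> B b -> d a b <= r -> d (F a) (F b) <= e) ->
  spread F A <= spread F B + 2 * e.
Proof.
  intros HA HAB Hclose. apply spread_le; [exact HA|]. intros a1 a2 Ha1 Ha2.
  destruct (HAB a1 Ha1) as [b1 [Hb1 H1]]. destruct (HAB a2 Ha2) as [b2 [Hb2 H2]].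
  pose proof (spread_ge F B b1 b2 Hb1 Hb2).
  pose proof (excess_lipschitz delta (d (F a1) (F a2)) (d (F b1) (F b2))) as Hlip.
  pose proof (dist_diff_le d Hm (F a1) (F a2) (F b1) (F b2)).
  pose proof (Hclose a1 b1 Ha1 Hb1 H1). pose proof (Hclose a2 b2 Ha2 Hb2 H2).
  apply Rabs_le_between' in Hlip. lra.
Qed.

Lemma spread_continuous F A eps : in_KX d A -> continuous_map d F -> 0 < eps ->
  exists eta, 0 < eta /\
    forall B, hausdorff_lt d A B eta -> Rabs (spread F B - spread F A) <= eps.
Proof.
  intros [[x Hx] HAc] HF Heps.
  destruct (uniform_continuity_on_compact d Hm A F (eps / 2) HAc HF ltac:(lra))
    as [eta [Heta Hu]].
  exists eta. split; [exact Heta|]. intros B (r & Hr0 & Hr & HAB & HBA).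
  assert (HB : exists y, B y) by (destruct (HAB x Hx) as [y [Hy _]]; eauto).
  assert (Hclose : forall a b, A a -> d a b <= r -> d (F a) (F b) <= eps / 2).
  { intros a b Ha Hab. left. apply Hu; [exact Ha|lra]. }
  pose proof (spread_le_of_nbhd F A B r (eps / 2) (ex_intro _ x Hx) HAB
    (fun a b Ha _ Hab => Hclose a b Ha Hab)).
  assert (spread F B <= spread F A + 2 * (eps / 2)); [|apply Rabs_le; lra].
  apply (spread_le_of_nbhd F B A r (eps / 2) HB HBA).
  intros b a Hb Ha Hba. rewrite dist_sym in Hba |- * by exact Hm. now apply Hclose.
Qed.

End Spread.

Lemma Z_of_nat_ind (P : Z -> Prop) :
  (forall n, P (Z.of_nat n)) -> (forall n, P (- Z.of_nat n)%Z) -> forall k, P k.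
Proof.
  intros Hpos Hneg k. destruct (Z_le_gt_dec 0 k).
  - replace k with (Z.of_nat (Z.to_nat k)) by lia. apply Hpos.
  - replace k with (- Z.of_nat (Z.to_nat (- k)))%Z by lia. apply Hneg.
Qed.

Section ForwardSum.
Context {X : Type}.
Variable d : X -> X -> R.
Variables f g : X -> X.
Variables delta lam : R.
Hypothesis lam_gt0 : 0 < lam.
Hypothesis lam_lt1 : lam < 1.

Definition psi (k : Z) (A : X -> Prop) : R := spread d delta (iterZ f g k) A.

Definition forward_sum (A : X -> Prop) : R :=
  wsum lam (fun n => psi (Z.of_nat n) A).

Lemma psi_bounded01 A : bounded01 (fun n => psi (Z.of_nat n) A).
Proof. intros n. apply spread_bounds. Qed.

Lemma forward_sum_nonneg A : 0 <= forward_sum A.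
Proof. apply wsum_bounds, psi_bounded01; assumption. Qed.

Lemma forward_sum_eq0 A : forward_sum A = 0 <-> forall n, psi (Z.of_nat n) A = 0.
Proof. apply wsum_eq0, psi_bounded01; assumption. Qed.

Lemma psi0_Kdelta A : in_Kdelta d delta A -> psi 0 A = 0.
Proof. intros [[Hne _] Hdiam]. unfold psi. now apply (spread_eq0 d delta). Qed.

Hypothesis Hh : homeomorphism d f g.

Lemma psi_image_f k A : psi k (image f A) = psi (k + 1) A.
Proof. apply spread_image. intros x. now apply (iterZ_succ_r d). Qed.

Lemma psi_image_g k A : psi k (image g A) = psi (k - 1) A.
Proof. apply spread_image. intros x. now apply (iterZ_pred_r d). Qed.

Lemma forward_sum_shift A : forward_sum A = psi 0 A + lam * forward_sum (image f A).
Proof.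
  unfold forward_sum. rewrite wsum_shift by (auto; apply psi_bounded01). f_equal.
  f_equal. apply wsum_ext. intros n. rewrite psi_image_f. f_equal. lia.
Qed.

Lemma forward_sum_image_g A :
  forward_sum (image g A) = psi (-1) A + lam * forward_sum A.
Proof.
  unfold forward_sum. rewrite wsum_shift by (auto; apply psi_bounded01).
  rewrite psi_image_g. f_equal. f_equal. apply wsum_ext. intros n.
  rewrite psi_image_g. f_equal. lia.
Qed.

Hypothesis Hm : is_metric d.

Lemma psi_continuous_upto N A e : in_KX d A -> 0 < e -> exists eta, 0 < eta /\
  forall B, hausdorff_lt d A B eta ->
    forall n, (n < N)%nat -> Rabs (psi (Z.of_nat n) B - psi (Z.of_nat n) A) <= e.
Proof.
  intros HA He. induction N as [|N [eta0 [Heta0 H0]]].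
  - exists 1. split; [lra|]. intros; lia.
  - destruct (spread_continuous d delta Hm (iterZ f g (Z.of_nat N)) A e HA
      (continuous_iterZ d f g Hh _) He) as [eta1 [Heta1 H1]].
    exists (Rmin eta0 eta1). split; [now apply Rmin_glb_lt|].
    intros B HB n Hn.
    destruct (Nat.eq_dec n N) as [->|HnN].
    + apply H1, (hausdorff_lt_mono d _ _ _ _ (Rmin_r eta0 eta1) HB).
    + apply H0; [|lia]. apply (hausdorff_lt_mono d _ _ _ _ (Rmin_l eta0 eta1) HB).
Qed.

Lemma forward_sum_continuous A eps : in_KX d A -> 0 < eps -> exists eta, 0 < eta /\
  forall B, hausdorff_lt d A B eta -> Rabs (forward_sum B - forward_sum A) < eps.
Proof.
  intros HA Heps.
  destruct (wsum_approx lam lam_gt0 lam_lt1 eps Heps) as (N & e & He & Happrox).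
  destruct (psi_continuous_upto N A e HA He) as [eta [Heta Hc]].
  exists eta. split; [exact Heta|]. intros B HB.
  apply Happrox; try apply psi_bounded01. now apply Hc.
Qed.

End ForwardSum.

Section Lyapunov.
Context {X : Type}.
Variable d : X -> X -> R.
Variables f g : X -> X.
Variables delta lam : R.
Hypothesis lam_gt0 : 0 < lam.
Hypothesis lam_lt1 : lam < 1.
Hypothesis Hm : is_metric d.

(* The two one-sided sums are the parts of [sum_{k in Z} lam^|k| psi_k A];
   the backward one is the forward one for [f^-1]. *)
Definition lyapunov (A : X -> Prop) : R :=
  forward_sum d f g delta lam A + forward_sum d g f delta lam A.

Lemma lyapunov_nonneg A : 0 <= lyapunov A.
Proof.
  unfold lyapunov.
  pose proof (forward_sum_nonneg d f g delta lam lam_gt0 lam_lt1 A).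
  pose proof (forward_sum_nonneg d g f delta lam lam_gt0 lam_lt1 A). lra.
Qed.

Lemma psi_swap n A : psi d g f delta (Z.of_nat n) A = psi d f g delta (- Z.of_nat n) A.
Proof. unfold psi. now rewrite iterZ_swap. Qed.

Lemma lyapunov_eq0 A : lyapunov A = 0 <-> forall k, psi d f g delta k A = 0.
Proof.
  unfold lyapunov.
  pose proof (forward_sum_nonneg d f g delta lam lam_gt0 lam_lt1 A).
  pose proof (forward_sum_nonneg d g f delta lam lam_gt0 lam_lt1 A).
  assert (Hsplit : forall P Q, 0 <= P -> 0 <= Q -> P + Q = 0 <-> P = 0 /\ Q = 0)
    by (intros; lra).
  rewrite Hsplit by assumption.
  rewrite (forward_sum_eq0 d f g delta lam lam_gt0 lam_lt1 A),
    (forward_sum_eq0 d g f delta lam lam_gt0 lam_lt1 A).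
  setoid_rewrite psi_swap.
  split; [intros [Hp Hn]; now apply Z_of_nat_ind|].
  intros Hk. split; intros n; apply Hk.
Qed.

Lemma lyapunov_eq0_singleton A :
  (forall x y, (forall n : Z, d (iterZ f g n x) (iterZ f g n y) <= delta) -> x = y) ->
  in_Kdelta d delta A -> lyapunov A = 0 <-> singleton A.
Proof.
  intros Hexp [[[x Hx] _] Hdiam]. rewrite lyapunov_eq0. unfold psi.
  setoid_rewrite (spread_eq0 d delta _ A (ex_intro _ x Hx)). split.
  - intros Hpsi. exists x. intros y. split; [|now intros ->].
    intros Hy. apply Hexp. intros n. now apply Hpsi.
  - intros [z Hz] k a b Ha Hb. apply Hz in Ha, Hb. subst a b.
    rewrite (dist_refl d Hm), <- (dist_refl d Hm x). now apply Hdiam.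
Qed.

Hypothesis Hh : homeomorphism d f g.
Hypothesis lam_root : lam * lam - 3 * lam + 1 = 0.

(* Since [lam + 1/lam = 3], shifting both one-sided sums by one step
   multiplies [lyapunov A] by [3]. *)
Lemma lyapunov_recurrence A :
  in_Kdelta d delta (image f A) -> in_Kdelta d delta A -> in_Kdelta d delta (image g A) ->
  lyapunov (image f A) - 2 * lyapunov A + lyapunov (image g A) = lyapunov A.
Proof.
  intros HfA HA HgA.
  pose proof (homeomorphism_sym d f g Hh) as Hh'.
  set (P := forward_sum d f g delta lam). set (Q := forward_sum d g f delta lam).
  assert (H0 : psi d f g delta 0 A = 0) by now apply psi0_Kdelta.
  assert (H1 : psi d f g delta 1 A = 0).
  { rewrite <- (psi0_Kdelta d f g delta (image f A) HfA), psi_image_f by exact Hh.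
    reflexivity. }
  assert (Hm1 : psi d f g delta (-1) A = 0).
  { rewrite <- (psi0_Kdelta d f g delta (image g A) HgA), psi_image_g by exact Hh.
    reflexivity. }
  assert (EPf : P A = lam * P (image f A)).
  { unfold P. rewrite forward_sum_shift, H0 by assumption. ring. }
  assert (EPg : P (image g A) = lam * P A).
  { unfold P. rewrite forward_sum_image_g, Hm1 by assumption. ring. }
  assert (EQg : Q A = lam * Q (image g A)).
  { unfold Q. rewrite forward_sum_shift by assumption.
    change (psi d g f delta 0 A) with (psi d f g delta 0 A). rewrite H0. ring. }
  assert (EQf : Q (image f A) = lam * Q A).
  { unfold Q. rewrite forward_sum_image_g by assumption.
    change (psi d g f delta (-1) A) with (psi d f g delta 1 A). rewrite H1. ring. }
  unfold lyapunov. fold P Q. rewrite EQf, EPg.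
  apply (Rmult_eq_reg_l lam); [|lra].
  transitivity (lam * P (image f A) + lam * Q (image g A)
    + (lam * lam - 2 * lam) * (P A + Q A)); [ring|].
  rewrite <- EPf, <- EQg. replace (lam * lam) with (3 * lam - 1) by lra. ring.
Qed.

Lemma lyapunov_continuous : continuous_on_Kdelta d delta lyapunov.
Proof.
  intros A eps [HA _] Heps.
  destruct (forward_sum_continuous d f g delta lam lam_gt0 lam_lt1 Hh Hm A (eps / 2)
    HA ltac:(lra)) as [eta1 [Heta1 H1]].
  destruct (forward_sum_continuous d g f delta lam lam_gt0 lam_lt1
    (homeomorphism_sym d f g Hh) Hm A (eps / 2) HA ltac:(lra)) as [eta2 [Heta2 H2]].
  exists (Rmin eta1 eta2). split; [now apply Rmin_glb_lt|]. intros B _ HB.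
  specialize (H1 B (hausdorff_lt_mono d _ _ _ _ (Rmin_l eta1 eta2) HB)).
  specialize (H2 B (hausdorff_lt_mono d _ _ _ _ (Rmin_r eta1 eta2) HB)).
  unfold lyapunov.
  replace (_ - _) with ((forward_sum d f g delta lam B - forward_sum d f g delta lam A)
    + (forward_sum d g f delta lam B - forward_sum d g f delta lam A)) by ring.
  eapply Rle_lt_trans; [apply Rabs_triang|]. lra.
Qed.

End Lyapunov.

Lemma exists_lam_root : exists lam, 0 < lam < 1 /\ lam * lam - 3 * lam + 1 = 0.
Proof.
  exists ((3 - sqrt 5) / 2).
  pose proof (sqrt_sqrt 5 ltac:(lra)). pose proof (sqrt_pos 5).
  repeat split; nra.
Qed.

Theorem mainTheorem17 (X : Type) (d : X -> X -> R) (f g : X -> X)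
  (Hmetric : is_metric d)
  (Hcompact : is_compact d (fun _ => True))
  (Hhomeo : homeomorphism d f g)
  (Hexp : expansive d f g) :
  exists (delta : R) (L : (X -> Prop) -> R),
    0 < delta /\
    continuous_on_Kdelta d delta L /\
    (forall A, in_Kdelta d delta A -> 0 <= L A /\ (L A = 0 <-> singleton A)) /\
    (forall A, in_Kdelta d delta (image f A) -> in_Kdelta d delta A ->
               in_Kdelta d delta (image g A) ->
               L (image f A) - 2 * L A + L (image g A) = L A).
Proof.
  destruct Hexp as (delta & Hdelta & Hexpd).
  destruct exists_lam_root as (lam & [Hlam0 Hlam1] & Hroot).
  exists delta, (lyapunov d f g delta lam). split; [exact Hdelta|]. split.
  - now apply lyapunov_continuous.
  - split.
    + intros A HA. split; [now apply lyapunov_nonneg|].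
      now apply lyapunov_eq0_singleton.
    + intros A. now apply lyapunov_recurrence.
Qed.
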